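(* Let $V$ be an $R$-module with a cyclic Whittaker vector $w\in V$ of type $\eta$ (so $V=Rw$). Then a vector $v\in V$ is a Whittaker vector of type $\eta$ if and only if $v=zw$ for some $z\in Z(R)$.
   Context: Let $f\in\mathbb{C}[H]$ be a polynomial. $R=R(f)$ is the associative $\mathbb{C}$-algebra generated by $E,F,H$ with relations $EF-FE=f(H)$, $HE-EH=E$, $HF-FH=-F$. Let $R(E)=\mathbb{C}[E]$. $Z(R)$ denotes the center of $R$ (it is the polynomial ring $\mathbb{C}[\Omega]$, $\Omega=2FE+u(H+1)$ where $f(H)=\tfrac12(u(H+1)-u(H))$). Fix an algebra homomorphism $\eta:R(E)\to\mathbb{C}$ with $\eta(E)\neq 0$. A vector $v$ of an $R$-module is a Whittaker vector of type $\eta$ if $Ev=\eta(E)v$; it is a cyclic Whittaker vector of $V$ if moreover $V=Rv$. *)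

From HB Require Import structures.
From mathcomp Require Import all_boot all_order all_algebra.
From mathcomp Require Import complex.
From mathcomp Require Import Rstruct.
Set Implicit Arguments. Unset Strict Implicit. Unset Printing Implicit Defensive.
Import Order.TTheory GRing.Theory Num.Theory.
Local Open Scope ring_scope.

Notation CC := (complex Rdefinitions.R).

(* Elements of the free associative C-algebra on E,F,H are represented  *)
(* by formal terms; R(f) is the quotient by the congruence [req f]      *)
(* generated by the associative C-algebra axioms and the defining       *)
(* relations EF-FE = f(H), HE-EH = E, HF-FH = -F.                       *)
Inductive term : Type :=
  | tC of CC
  | tE | tF | tH
  | tAdd of term & term
  | tMul of term & term.

Definition tOpp (t : term) : term := tMul (tC (-1)) t.
Definition tSub (s t : term) : term := tAdd s (tOpp t).

Fixpoint tpow (t : term) (n : nat) : term :=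
  match n with 0 => tC 1 | n'.+1 => tMul t (tpow t n') end.

Definition fH (f : {poly CC}) : term :=
  foldr (fun i acc => tAdd (tMul (tC f`_i) (tpow tH i)) acc) (tC 0)
        (iota 0 (size f)).

Inductive req (f : {poly CC}) : term -> term -> Prop :=
  | req_refl t : req f t t
  | req_sym s t : req f s t -> req f t s
  | req_trans s t u : req f s t -> req f t u -> req f s u
  | req_add s s' t t' : req f s s' -> req f t t' -> req f (tAdd s t) (tAdd s' t')
  | req_mul s s' t t' : req f s s' -> req f t t' -> req f (tMul s t) (tMul s' t')
  | req_addA s t u : req f (tAdd s (tAdd t u)) (tAdd (tAdd s t) u)
  | req_addC s t : req f (tAdd s t) (tAdd t s)
  | req_add0 t : req f (tAdd (tC 0) t) t
  | req_mulA s t u : req f (tMul s (tMul t u)) (tMul (tMul s t) u)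
  | req_mul1l t : req f (tMul (tC 1) t) t
  | req_mul1r t : req f (tMul t (tC 1)) t
  | req_mul0l t : req f (tMul (tC 0) t) (tC 0)
  | req_mulDl s t u : req f (tMul (tAdd s t) u) (tAdd (tMul s u) (tMul t u))
  | req_mulDr s t u : req f (tMul s (tAdd t u)) (tAdd (tMul s t) (tMul s u))
  | req_scalC c t : req f (tMul (tC c) t) (tMul t (tC c))
  | req_Cadd c d : req f (tAdd (tC c) (tC d)) (tC (c + d))
  | req_Cmul c d : req f (tMul (tC c) (tC d)) (tC (c * d))
  | req_EF : req f (tSub (tMul tE tF) (tMul tF tE)) (fH f)
  | req_HE : req f (tSub (tMul tH tE) (tMul tE tH)) tE
  | req_HF : req f (tSub (tMul tH tF) (tMul tF tH)) (tOpp tF).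

Definition in_center (f : {poly CC}) (z : term) : Prop :=
  forall t : term, req f (tMul z t) (tMul t z).

Definition peval_end (V : lmodType CC) (p : {poly CC}) (X : V -> V) (v : V) : V :=
  \sum_(i < size p) p`_i *: iter i X v.

Definition is_Rmodule (f : {poly CC}) (V : lmodType CC)
  (E F H : {linear V -> V}) : Prop :=
  [/\ forall v, E (F v) - F (E v) = peval_end f H v,
      forall v, H (E v) - E (H v) = E v &
      forall v, H (F v) - F (H v) = - F v].

Fixpoint act (V : lmodType CC) (E F H : {linear V -> V}) (t : term) (v : V) : V :=
  match t with
  | tC c => c *: v
  | tE => E v
  | tF => F v
  | tH => H v
  | tAdd s u => act E F H s v + act E F H u v
  | tMul s u => act E F H s (act E F H u v)
  end.

(* Whittaker vector of type eta, where eta : C[E] -> C is determined by eta(E) = a *)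
Definition whittaker (V : lmodType CC) (E : {linear V -> V}) (a : CC) (v : V) : Prop :=
  E v = a *: v.

Definition cyclic_gen (V : lmodType CC) (E F H : {linear V -> V}) (w : V) : Prop :=
  forall v : V, exists t : term, v = act E F H t w.

(* Let U satisfy U(X) - U(X-1) = 2 f(X); it exists because the backward
   difference is onto C[X] (its value on the rising factorial
   [X]^(k+1) = X(X+1)...(X+k) is (k+1) [X]^k).  The relations of R(f) make
   Omega = 2FE + U(H) central.  In V = R w we have E w = a w and
   F w = (2a)^-1 (Omega - U(H)) w, so V is spanned by the vectors
   c(Omega) p(H) w; on these, x |-> x - a^-1 E x acts as p |-> p(H) - p(H-1),
   which lowers [H]^(k+1) to (k+1) [H]^k.  If v = sum_k c_k(Omega) [H]^k w is
   a Whittaker vector, it is killed by this operator, and induction on the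
   number of terms shows, without any linear independence, that every term
   with k > 0 vanishes: v = c_0(Omega) w.  Conversely, central elements map
   Whittaker vectors to Whittaker vectors. *)

From HB Require Import structures.
From mathcomp Require Import all_boot all_order all_algebra.
From mathcomp Require Import complex Rstruct.
From Stdlib Require Import Setoid Morphisms.
Import GRing.Theory Num.Theory.
Local Open Scope ring_scope.

Lemma monic_basis_ind (R : nzRingType) (b : nat -> {poly R}) (P : {poly R} -> Prop) :
  (forall k, b k \is monic) -> (forall k, size (b k) = k.+1) ->
  P 0 -> (forall p q, P p -> P q -> P (p + q)) -> (forall c p, P p -> P (c *: p)) ->
  (forall k, P (b k)) -> forall p, P p.
Proof.
move=> b_monic size_b P0 PD PZ Pb p.
elim: (size p) {-2}p (leqnn (size p)) => [|n IH] {}p.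
  by rewrite leqn0 size_poly_eq0 => /eqP ->.
rewrite leq_eqVlt ltnS => /predU1P[size_p | /IH //].
rewrite -(subrK (lead_coef p *: b n) p); apply: PD; last exact: PZ.
apply/IH/leq_sizeP => j; rewrite leq_eqVlt => /predU1P[<- | lt_nj].
  have lead_b : (b n)`_n = 1 by have /monicP := b_monic n; rewrite lead_coefE size_b.
  by rewrite coefB coefZ lead_b mulr1 lead_coefE size_p subrr.
by rewrite coefB coefZ !nth_default ?size_b ?size_p ?mulr0 ?subrr.
Qed.

Section RisingFactorial.
Variable R : comNzRingType.

Definition rising (k : nat) : {poly R} := \prod_(j < k) ('X + j%:R%:P).

Lemma rising_monic k : rising k \is monic.
Proof. by apply: monic_prod => j _; apply: monicXaddC. Qed.

Lemma size_rising k : size (rising k) = k.+1.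
Proof.
rewrite /rising (eq_bigr (fun j : 'I_k => 'X - (- j%:R)%:P)) => [|j _].
  by rewrite size_prod_XsubC /index_enum -enumT size_enum_ord.
by rewrite polyCN opprK.
Qed.

Lemma rising0 : rising 0 = 1.
Proof. exact: big_ord0. Qed.

Lemma risingSr k : rising k.+1 = rising k * ('X + k%:R%:P).
Proof. by rewrite /rising big_ord_recr. Qed.

Lemma rising_comp_subX1 k : rising k.+1 \Po ('X - 1) = ('X - 1) * rising k.
Proof.
rewrite /rising big_ord_recl rmorphM rmorph_prod /= comp_polyD comp_polyX comp_polyC.
rewrite polyC0 addr0; congr (_ * _); apply: eq_bigr => j _.
rewrite comp_polyD comp_polyX comp_polyC -addrA; congr (_ + _).
by rewrite /bump /= add1n -natr1 polyCD polyC1 addrC addrK.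
Qed.

Lemma rising_backward_diff k :
  rising k.+1 - (rising k.+1 \Po ('X - 1)) = k.+1%:R *: rising k.
Proof.
rewrite rising_comp_subX1 risingSr [rising k * _]mulrC -mulrBl -mul_polyC.
congr (_ * _); by rewrite opprB addrC addrA subrK -natr1 polyCD polyC1 addrC.
Qed.

End RisingFactorial.


Lemma backward_diff_surj {K : numFieldType} (g : {poly K}) :
  exists u, u - (u \Po ('X - 1)) = g.
Proof.
elim/(@monic_basis_ind _ (@rising K)): g.
- exact: rising_monic.
- exact: size_rising.
- by exists 0; rewrite comp_poly0 subrr.
- move=> p q [u <-] [v <-]; exists (u + v).
  by rewrite comp_polyD opprD addrACA.
- move=> c p [u <-]; exists (c *: u).
  by rewrite comp_polyZ -scalerBr.
- move=> k; exists (k.+1%:R^-1 *: rising K k.+1).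
  by rewrite comp_polyZ -scalerBr rising_backward_diff scalerA mulVf ?scale1r ?pnatr_eq0.
Qed.

Declare Scope Rf_scope.
Delimit Scope Rf_scope with Rf.
Bind Scope Rf_scope with term.
Notation "s + t" := (tAdd s t) : Rf_scope.
Notation "s * t" := (tMul s t) : Rf_scope.
Notation "c %:T" := (tC c) : Rf_scope.

#[global] Instance req_equiv f : Equivalence (req f).
Proof. by split; [exact: req_refl | exact: req_sym | exact: req_trans]. Qed.
#[global] Instance tAdd_req_proper f : Proper (req f ==> req f ==> req f) tAdd.
Proof. by move=> ? ? ? ? ? ?; apply: req_add. Qed.
#[global] Instance tMul_req_proper f : Proper (req f ==> req f ==> req f) tMul.
Proof. by move=> ? ? ? ? ? ?; apply: req_mul. Qed.

#[global] Hint Resolve req_refl : core.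

Arguments req_addA {f} s t u.
Arguments req_addC {f} s t.
Arguments req_add0 {f} t.
Arguments req_mulA {f} s t u.
Arguments req_mul1l {f} t.
Arguments req_mul1r {f} t.
Arguments req_mul0l {f} t.
Arguments req_mulDl {f} s t u.
Arguments req_mulDr {f} s t u.
Arguments req_scalC {f} c t.
Arguments req_Cadd {f} c d.
Arguments req_Cmul {f} c d.

Section TermAlgebra.
Context {f : {poly CC}}.
Local Notation "s ≈ t" := (req f s t) (at level 70).

Lemma req_addr0 t : t + 0%:T ≈ t.
Proof. by rewrite req_addC req_add0. Qed.

Lemma req_mulr0 t : t * 0%:T ≈ 0%:T.
Proof. by rewrite -req_scalC req_mul0l. Qed.

Lemma req_addACA s t u v : (s + t) + (u + v) ≈ (s + u) + (t + v).
Proof. by rewrite -!req_addA (req_addA t) (req_addC t u) -(req_addA u). Qed.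

Lemma req_mulCA c s t : c%:T * (s * t) ≈ s * (c%:T * t).
Proof. by rewrite req_mulA req_scalC -req_mulA. Qed.

Lemma req_addNt t : tOpp t + t ≈ 0%:T.
Proof.
rewrite -{2}(req_mul1l t) -req_mulDl req_Cadd addNr.
exact: req_mul0l.
Qed.

Lemma req_subE {s t u} : tSub s t ≈ u -> s ≈ u + t.
Proof. by move=> <-; rewrite -req_addA req_addNt req_addr0. Qed.

Lemma tpowSr t n : tpow t n.+1 ≈ tpow t n * t.
Proof.
elim: n => [|n IH] /=; first by rewrite req_mul1r req_mul1l.
by rewrite [X in _ * X ≈ _]IH req_mulA.
Qed.

End TermAlgebra.

Definition psum (p : {poly CC}) (t : term) (s : seq nat) : term :=
  (foldr (fun i acc => (p`_i)%:T * tpow t i + acc) 0%:T s)%Rf.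

Definition peval_term (p : {poly CC}) (t : term) : term :=
  psum p t (iota 0 (size p)).

Lemma fH_peval_term f : fH f = peval_term f tH.
Proof. by []. Qed.

Section PolyEval.
Context {f : {poly CC}}.
Variable t : term.
Local Notation "s ≈ u" := (req f s u) (at level 70).

Lemma psum_cat p s1 s2 : psum p t (s1 ++ s2) ≈ psum p t s1 + psum p t s2.
Proof. by elim: s1 => [|i s1 IH] /=; rewrite ?req_add0 // IH req_addA. Qed.

Lemma psum_eq0 (p : {poly CC}) (s : seq nat) :
  {in s, forall i, p`_i = 0} -> psum p t s ≈ 0%:T.
Proof.
elim: s => [|i s IH] //= p_s0.
rewrite p_s0 ?mem_head // req_mul0l req_add0 IH // => j s_j.
by rewrite p_s0 // in_cons s_j orbT.
Qed.

Lemma peval_term_widen {p : {poly CC}} {n} :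
  (size p <= n)%N -> peval_term p t ≈ psum p t (iota 0 n).
Proof.
move=> le_p_n; rewrite -(subnKC le_p_n) iotaD psum_cat.
rewrite [X in (_ + X)%Rf]psum_eq0 ?req_addr0 // => i.
by rewrite mem_iota add0n => /andP[le_p_i _]; rewrite nth_default.
Qed.

Lemma psum_add p q s : psum (p + q) t s ≈ psum p t s + psum q t s.
Proof.
elim: s => [|i s IH] /=; first by rewrite req_add0.
by rewrite IH coefD -req_Cadd req_mulDl req_addACA.
Qed.

Lemma psum_scale c p s : psum (c *: p) t s ≈ c%:T * psum p t s.
Proof.
elim: s => [|i s IH] /=; first by rewrite req_Cmul mulr0.
by rewrite IH coefZ -req_Cmul -req_mulA req_mulDr.
Qed.

Lemma psum_mulX p m n : psum (p * 'X) t (iota m.+1 n) ≈ psum p t (iota m n) * t.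
Proof.
elim: n m => [|n IH] m /=; first by rewrite req_mul0l.
by rewrite IH coefMX -/(tpow t m.+1) tpowSr req_mulA req_mulDl.
Qed.

Lemma peval_term0 : peval_term 0 t = tC 0.
Proof. by rewrite /peval_term size_poly0. Qed.

Lemma peval_termD p q : peval_term (p + q) t ≈ peval_term p t + peval_term q t.
Proof.
rewrite (peval_term_widen (size_polyD p q)) psum_add.
rewrite (peval_term_widen (leq_maxl _ (size q))).
by rewrite (peval_term_widen (leq_maxr (size p) _)).
Qed.

Lemma peval_termZ c p : peval_term (c *: p) t ≈ c%:T * peval_term p t.
Proof. by rewrite (peval_term_widen (size_scale_leq c p)) psum_scale. Qed.

Lemma peval_termMX p : peval_term (p * 'X) t ≈ peval_term p t * t.
Proof.
have size_pX : (size (p * 'X)%R <= (size p).+1)%N.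
  by rewrite (leq_trans (size_polyMleq _ _)) // size_polyX addn2.
by rewrite (peval_term_widen size_pX) /= coefMX eqxx req_mul0l req_add0 psum_mulX.
Qed.

Lemma peval_termC c : peval_term c%:P t ≈ c%:T.
Proof.
rewrite (peval_term_widen (size_polyC_leq1 c)) /= coefC eqxx.
by rewrite req_addr0 req_mul1r.
Qed.

Lemma peval_termX : peval_term 'X t ≈ t.
Proof. by rewrite -['X]mul1r peval_termMX -polyC1 peval_termC req_mul1l. Qed.

Lemma peval_term_XaddC c : peval_term ('X + c%:P) t ≈ t + c%:T.
Proof. by rewrite peval_termD peval_termX peval_termC. Qed.

Lemma peval_termMXaddC p c :
  peval_term (p * 'X + c%:P) t ≈ peval_term p t * t + c%:T.
Proof. by rewrite peval_termD peval_termMX peval_termC. Qed.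

Lemma peval_termM p q : peval_term (p * q) t ≈ peval_term p t * peval_term q t.
Proof.
elim/poly_ind: q => [|q c IH]; first by rewrite mulr0 peval_term0 req_mulr0.
rewrite mulrDr mulrA [p * c%:P]mulrC mul_polyC peval_termD peval_termZ peval_termMX IH.
by rewrite peval_termMXaddC req_mulDr req_mulA req_scalC.
Qed.

Lemma peval_term_intertwine e q p :
  e * t ≈ peval_term q t * e ->
  e * peval_term p t ≈ peval_term (p \Po q) t * e.
Proof.
move=> e_t; elim/poly_ind: p => [|p c IH].
  by rewrite comp_poly0 peval_term0 req_mulr0 req_mul0l.
rewrite comp_polyD comp_polyM comp_polyX comp_polyC peval_termMXaddC.
rewrite peval_termD peval_termM peval_termC.
by rewrite req_mulDr req_mulA IH -req_mulA e_t req_mulA -req_scalC req_mulDl.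
Qed.

Lemma peval_term_comm p : t * peval_term p t ≈ peval_term p t * t.
Proof.
by rewrite (@peval_term_intertwine t 'X) ?comp_polyXr // peval_termX.
Qed.

End PolyEval.

Section Center.
Variable f : {poly CC}.
Local Notation "s ≈ t" := (req f s t) (at level 70).

Lemma in_center_gen z :
  z * tE ≈ tE * z -> z * tF ≈ tF * z -> z * tH ≈ tH * z -> in_center f z.
Proof.
move=> zE zF zH t; elim: t => [c| | | |s IHs u IHu|s IHs u IHu] //.
- by rewrite req_scalC.
- by rewrite req_mulDr req_mulDl IHs IHu.
- by rewrite req_mulA IHs -req_mulA IHu req_mulA.
Qed.

Lemma in_center_req z z' : z ≈ z' -> in_center f z -> in_center f z'.
Proof. by move=> zz' z_c t; rewrite -zz'. Qed.

Lemma in_centerC c : in_center f (tC c).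
Proof. by move=> t; rewrite req_scalC. Qed.

Lemma in_centerD z z' : in_center f z -> in_center f z' -> in_center f (z + z').
Proof. by move=> z_c z'_c t; rewrite req_mulDl req_mulDr z_c z'_c. Qed.

Lemma in_centerM z z' : in_center f z -> in_center f z' -> in_center f (z * z').
Proof. by move=> z_c z'_c t; rewrite -req_mulA z'_c req_mulA z_c req_mulA. Qed.

Lemma in_center_peval_term z p : in_center f z -> in_center f (peval_term p z).
Proof.
move=> z_c; elim/poly_ind: p => [|p c IH].
  by rewrite peval_term0; apply: in_centerC.
apply: in_center_req (req_sym (peval_termMXaddC z p c)) _.
by apply: in_centerD; [apply: in_centerM | apply: in_centerC].
Qed.

End Center.

Section Commutation.
Variable f : {poly CC}.
Local Notation "s ≈ t" := (req f s t) (at level 70).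

Lemma tE_tH : tE * tH ≈ peval_term ('X - 1) tH * tE.
Proof.
rewrite -polyC1 -polyCN peval_term_XaddC req_mulDl (req_subE (req_HE f)).
by rewrite -/(tOpp tE) (req_addC tE) -req_addA (req_addC tE) req_addNt req_addr0.
Qed.

Lemma tF_tH : tF * tH ≈ peval_term ('X + 1) tH * tF.
Proof.
rewrite -polyC1 peval_term_XaddC req_mulDl (req_subE (req_HF f)) req_mul1l.
by rewrite (req_addC (tOpp tF)) -req_addA req_addNt req_addr0.
Qed.

Lemma tE_peval_tH p : tE * peval_term p tH ≈ peval_term (p \Po ('X - 1)) tH * tE.
Proof. exact/peval_term_intertwine/tE_tH. Qed.

Lemma tF_peval_tH p : tF * peval_term p tH ≈ peval_term (p \Po ('X + 1)) tH * tF.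
Proof. exact/peval_term_intertwine/tF_tH. Qed.

Lemma tE_tF : tE * tF ≈ peval_term f tH + tF * tE.
Proof. exact: req_subE (req_EF f). Qed.

End Commutation.

(* In the paper's notation U(H) = u(H+1). *)
Definition casimir (U : {poly CC}) : term := (2%:T * (tF * tE) + peval_term U tH)%Rf.

Section Casimir.
Context {f U : {poly CC}}.
Hypothesis U_diff : U - (U \Po ('X - 1)) = 2 *: f.
Local Notation "s ≈ t" := (req f s t) (at level 70).

Lemma casimir_tE : casimir U * tE ≈ tE * casimir U.
Proof.
have U_E : peval_term U tH ≈ 2%:T * peval_term f tH + peval_term (U \Po ('X - 1)) tH.
  by rewrite -peval_termZ -peval_termD -U_diff subrK.
rewrite /casimir req_mulDl req_mulDr tE_peval_tH U_E req_mulDl -req_mulCA.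
rewrite (req_mulA tE tF tE) tE_tF req_mulDl req_mulDr.
rewrite -(req_mulA (tC 2) (tF * tE)) -(req_mulA (tC 2) (peval_term f tH)).
by rewrite req_addA (req_addC (tC 2 * (tF * tE * tE))).
Qed.

Lemma casimir_tF : casimir U * tF ≈ tF * casimir U.
Proof.
have U_shift : U \Po ('X + 1) = 2 *: (f \Po ('X + 1)) + U.
  rewrite -comp_polyZ -U_diff comp_polyB -comp_polyA comp_polyB comp_polyX.
  by rewrite (comp_polyC 1) addrK comp_polyXr subrK.
rewrite /casimir req_mulDl req_mulDr tF_peval_tH U_shift.
rewrite peval_termD peval_termZ req_mulDl.
rewrite -(req_mulA (tC 2) (tF * tE)) -(req_mulA tF tE tF) tE_tF req_mulDr tF_peval_tH.
rewrite -req_mulCA -(req_mulA (tC 2) (peval_term _ tH)) req_mulDr.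
by rewrite req_addA (req_addC (tC 2 * (tF * (tF * tE)))).
Qed.

Lemma casimir_tH : casimir U * tH ≈ tH * casimir U.
Proof.
have FE_H : tF * tE * tH ≈ tH * (tF * tE).
  rewrite -req_mulA tE_tH req_mulA tF_peval_tH -req_mulA.
  by rewrite comp_polyB comp_polyX (comp_polyC 1) addrK peval_termX.
rewrite /casimir req_mulDl req_mulDr -(req_mulA (tC 2)) FE_H req_mulCA.
by rewrite peval_term_comm.
Qed.

Lemma casimir_central : in_center f (casimir U).
Proof. exact: in_center_gen casimir_tE casimir_tF casimir_tH. Qed.

End Casimir.

Section Action.
Context {V : lmodType CC} {E F H : {linear V -> V}}.

Lemma act_is_linear t : linear (act E F H t).
Proof.
elim: t => [c| | | |s IHs u IHu|s IHs u IHu] k x y /=.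
- by rewrite scalerDr !scalerA mulrC.
- exact: linearP.
- exact: linearP.
- exact: linearP.
- by rewrite IHs IHu scalerDr addrACA.
- by rewrite IHu IHs.
Qed.

HB.instance Definition _ t :=
  GRing.isLinear.Build CC V V *:%R (act E F H t) (act_is_linear t).

Lemma act_peval_term p t x :
  act E F H (peval_term p t) x = \sum_(i < size p) p`_i *: iter i (act E F H t) x.
Proof.
rewrite /peval_term -(big_mkord xpredT (fun i => p`_i *: iter i _ x)) /index_iota subn0.
elim: (iota 0 (size p)) => [|i s IH] /=; first by rewrite big_nil scale0r.
rewrite big_cons IH; congr (_ *: _ + _).
by elim: i => [|i IHi] /=; rewrite ?scale1r ?IHi.
Qed.

Context {f : {poly CC}}.
Hypothesis HV : is_Rmodule f E F H.

Lemma act_req {s t} : req f s t -> act E F H s =1 act E F H t.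
Proof.
case: HV => EF HE HF; elim=> {s t} //=.
- by move=> s t _ IH x; rewrite IH.
- by move=> s t u _ IH1 _ IH2 x; rewrite IH1 IH2.
- by move=> s s' t t' _ IH1 _ IH2 x; rewrite IH1 IH2.
- by move=> s s' t t' _ IH1 _ IH2 x; rewrite IH2 IH1.
- by move=> s t u x; rewrite addrA.
- by move=> s t x; rewrite addrC.
- by move=> t x; rewrite scale0r add0r.
- by move=> t x; rewrite scale1r.
- by move=> t x; rewrite scale1r.
- by move=> t x; rewrite !scale0r.
- by move=> s t u x; rewrite linearD.
- by move=> c t x; rewrite linearZ.
- by move=> c d x; rewrite scalerDl.
- by move=> c d x; rewrite scalerA.
- by move=> x; rewrite !scaleN1r EF fH_peval_term act_peval_term.
- by move=> x; rewrite !scaleN1r HE.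
- by move=> x; rewrite !scaleN1r HF.
Qed.

Lemma act_central_whittaker {z a w} :
  in_center f z -> E w = a *: w -> E (act E F H z w) = a *: act E F H z w.
Proof.
move=> z_c Ew; rewrite -[E _]/(act E F H (tE * z) w) (act_req (req_sym (z_c tE))) /=.
by rewrite Ew linearZ.
Qed.

End Action.

Section WhittakerModule.
Context {f : {poly CC}} {V : lmodType CC} {E F H : {linear V -> V}}.
Hypothesis HV : is_Rmodule f E F H.
Context {a : CC} {w : V} {U : {poly CC}}.
Hypothesis a_neq0 : a != 0.
Hypothesis w_whittaker : E w = a *: w.
Hypothesis U_diff : U - (U \Po ('X - 1)) = 2 *: f.
Local Notation act := (act E F H).
Local Notation Om := (casimir U).

#[local] Instance act_proper : Proper (req f ==> eq ==> eq) act.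
Proof. by move=> s t /(act_req HV) st x _ <-. Qed.

Lemma casimir_poly_central c : in_center f (peval_term c Om).
Proof. exact/in_center_peval_term/casimir_central. Qed.

Definition ohw c p := act (peval_term c Om * peval_term p tH) w.

Lemma ohwDl c1 c2 p : ohw (c1 + c2) p = ohw c1 p + ohw c2 p.
Proof. by rewrite /ohw peval_termD req_mulDl. Qed.

Lemma ohwDr c p1 p2 : ohw c (p1 + p2) = ohw c p1 + ohw c p2.
Proof. by rewrite /ohw peval_termD req_mulDr. Qed.

Lemma ohwZl k c p : ohw (k *: c) p = k *: ohw c p.
Proof. by rewrite /ohw peval_termZ -req_mulA. Qed.

Lemma ohwZr k c p : ohw c (k *: p) = k *: ohw c p.
Proof. by rewrite /ohw peval_termZ -req_mulCA. Qed.

Lemma ohw0l p : ohw 0 p = 0.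
Proof. by rewrite -(scale0r (0 : {poly CC})) ohwZl scale0r. Qed.

Lemma ohw0r c : ohw c 0 = 0.
Proof. by rewrite -(scale0r (0 : {poly CC})) ohwZr scale0r. Qed.

Lemma ohw_1 c : ohw c 1 = act (peval_term c Om) w.
Proof. by rewrite /ohw -polyC1 peval_termC req_mul1r. Qed.

Lemma ohwMl q c p : ohw c (q * p) = act (peval_term q tH) (ohw c p).
Proof.
by rewrite /ohw peval_termM req_mulA casimir_poly_central -req_mulA.
Qed.

Lemma H_ohw c p : H (ohw c p) = ohw c ('X * p).
Proof. by rewrite ohwMl peval_termX. Qed.

Lemma E_ohw c p : E (ohw c p) = a *: ohw c (p \Po ('X - 1)).
Proof.
rewrite -[E _]/(act (tE * (peval_term c Om * peval_term p tH)) w).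
rewrite req_mulA -casimir_poly_central -req_mulA tE_peval_tH req_mulA.
by rewrite [act _ w]/= w_whittaker !linearZ.
Qed.

Lemma F_w : F w = (2 * a)^-1 *: (act Om w - act (peval_term U tH) w).
Proof.
rewrite -[act Om w]/(2 *: F (E w) + act (peval_term U tH) w) addrK w_whittaker.
rewrite [F (a *: w)]linearZ !scalerA -mulrA mulVf ?scale1r //.
by rewrite mulf_neq0 ?pnatr_eq0.
Qed.

Lemma F_ohw c p : F (ohw c p) =
  (2 * a)^-1 *: (ohw (c * 'X) (p \Po ('X + 1)) - ohw c ((p \Po ('X + 1)) * U)).
Proof.
rewrite -[F _]/(act (tF * (peval_term c Om * peval_term p tH)) w).
rewrite req_mulA -casimir_poly_central -req_mulA tF_peval_tH req_mulA.
rewrite [act _ w]/= F_w !linearZ !linearB -scalerBr; congr (_ *: (_ - _)).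
- by rewrite /ohw peval_termMX -req_mulA (casimir_central U_diff (peval_term _ tH)).
- by rewrite /ohw peval_termM.
Qed.

Definition in_span x :=
  exists P : {poly {poly CC}}, x = \sum_(k < size P) ohw P`_k (rising CC k).

Lemma sum_ohw_widen {P : {poly {poly CC}}} {n} : (size P <= n)%N ->
  \sum_(k < size P) ohw P`_k (rising CC k) = \sum_(k < n) ohw P`_k (rising CC k).
Proof.
move=> le_P_n; rewrite -(subnKC le_P_n) big_split_ord /=.
rewrite [X in _ + X]big1 ?addr0 // => k _.
by rewrite nth_default ?leq_addr // ohw0l.
Qed.

Lemma in_span0 : in_span 0.
Proof. by exists 0; rewrite size_poly0 big_ord0. Qed.

Lemma in_spanD x y : in_span x -> in_span y -> in_span (x + y).
Proof.
move=> [P ->] [Q ->]; exists (P + Q).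
rewrite (sum_ohw_widen (size_polyD P Q)) (sum_ohw_widen (leq_maxl _ (size Q))).
rewrite (sum_ohw_widen (leq_maxr (size P) _)) -big_split.
by apply: eq_bigr => k _; rewrite coefD ohwDl.
Qed.

Lemma in_spanZ k x : in_span x -> in_span (k *: x).
Proof.
move=> [P ->]; exists (k%:P *: P).
rewrite (sum_ohw_widen (size_scale_leq _ P)) scaler_sumr.
by apply: eq_bigr => i _; rewrite coefZ mul_polyC ohwZl.
Qed.

Lemma in_span_ohw_rising c k : in_span (ohw c (rising CC k)).
Proof.
exists (c *: 'X^k); rewrite (sum_ohw_widen (n := k.+1)); last first.
  by rewrite (leq_trans (size_scale_leq _ _)) // size_polyXn.
rewrite big_ord_recr /= big1 ?add0r => [|i _]; first by rewrite coefZ coefXn eqxx mulr1.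
by rewrite coefZ coefXn ltn_eqF // mulr0 ohw0l.
Qed.

Lemma in_span_ohw c p : in_span (ohw c p).
Proof.
elim/(@monic_basis_ind _ (rising CC)): p.
- exact: rising_monic.
- exact: size_rising.
- by rewrite ohw0r; apply: in_span0.
- by move=> p q; rewrite ohwDr; apply: in_spanD.
- by move=> k p; rewrite ohwZr; apply: in_spanZ.
- exact: in_span_ohw_rising.
Qed.

Lemma in_span_linear (L : {linear V -> V}) x :
  (forall c p, in_span (L (ohw c p))) -> in_span x -> in_span (L x).
Proof.
move=> L_ohw [P ->]; rewrite linear_sum.
by elim/big_ind: _ => [|y z|k _]; [apply: in_span0 | apply: in_spanD | apply: L_ohw].
Qed.

Lemma in_span_act t x : in_span x -> in_span (act t x).
Proof.
elim: t x => [c| | | |s IHs u IHu|s IHs u IHu] x x_span /=.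
- exact: in_spanZ.
- apply: in_span_linear x_span => c p.
  by rewrite E_ohw; apply/in_spanZ/in_span_ohw.
- apply: in_span_linear x_span => c p.
  rewrite F_ohw -scaleN1r; apply/in_spanZ/in_spanD; first exact: in_span_ohw.
  exact/in_spanZ/in_span_ohw.
- apply: in_span_linear x_span => c p.
  by rewrite H_ohw; apply: in_span_ohw.
- by apply: in_spanD; [apply: IHs | apply: IHu].
- by apply/IHs/IHu.
Qed.

Lemma in_span_w : in_span w.
Proof.
have -> : w = ohw 1 1 by rewrite ohw_1 -polyC1 peval_termC /= scale1r.
exact: in_span_ohw.
Qed.

Definition defect x := x - a^-1 *: E x.

Lemma defect_is_linear : linear defect.
Proof.
move=> k x y; rewrite /defect linearP scalerDr scalerA mulrC -scalerA.
by rewrite opprD addrACA -scalerBr.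
Qed.

HB.instance Definition _ :=
  GRing.isLinear.Build CC V V *:%R defect defect_is_linear.

Lemma defect_ohw c p : defect (ohw c p) = ohw c (p - (p \Po ('X - 1))).
Proof.
rewrite /defect E_ohw scalerA mulVf // scale1r ohwDr.
by rewrite -[- (p \Po _)]scaleN1r ohwZr scaleN1r.
Qed.

Lemma defect_sum_ohw_rising n (C : nat -> {poly CC}) :
  defect (\sum_(k < n.+1) ohw (C k) (rising CC k)) =
  \sum_(k < n) ohw (k.+1%:R *: C k.+1) (rising CC k).
Proof.
rewrite linear_sum /= big_ord_recl defect_ohw rising0 (comp_polyC 1) subrr ohw0r add0r.
by apply: eq_bigr => k _; rewrite defect_ohw rising_backward_diff ohwZr ohwZl.
Qed.

Lemma ohw_rising_succ_eq0 c k :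
  ohw (k.+1%:R *: c) (rising CC k) = 0 -> ohw c (rising CC k.+1) = 0.
Proof.
rewrite ohwZl => /eqP; rewrite scaler_eq0 pnatr_eq0 /= => /eqP ohw_k0.
by rewrite risingSr mulrC ohwMl ohw_k0 linear0.
Qed.

Lemma defect_eq0_ohw_rising_succ n (C : nat -> {poly CC}) :
  defect (\sum_(k < n.+1) ohw (C k) (rising CC k)) = 0 ->
  forall k, (k < n)%N -> ohw (C k.+1) (rising CC k.+1) = 0.
Proof.
elim: n C => [// | n IH] C; rewrite defect_sum_ohw_rising => sum_D0.
set D := fun k => k.+1%:R *: C k.+1 in sum_D0.
have D_top k : (k < n)%N -> ohw (D k.+1) (rising CC k.+1) = 0.
  by apply: IH; rewrite sum_D0 linear0.
have D_0 : ohw (D 0%N) (rising CC 0) = 0.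
  by rewrite -sum_D0 big_ord_recl big1 ?addr0 // => k _; apply: D_top.
by move=> [|k] lt_k_n; apply: ohw_rising_succ_eq0; [exact: D_0 | exact: D_top].
Qed.

Lemma span_whittaker_casimir x :
  E x = a *: x -> in_span x -> exists c, x = act (peval_term c Om) w.
Proof.
move=> Ex [P x_sum]; exists P`_0.
have defect_x : defect x = 0 by rewrite /defect Ex scalerA mulVf // scale1r subrr.
rewrite x_sum (sum_ohw_widen (leqnSn (size P))) in defect_x *.
rewrite big_ord_recl big1 ?addr0 ?rising0 ?ohw_1 // => k _.
exact: defect_eq0_ohw_rising_succ defect_x _ (ltn_ord k).
Qed.

Lemma cyclic_whittaker_casimir v :
  cyclic_gen E F H w -> E v = a *: v ->
  exists c, v = act (peval_term c Om) w.
Proof.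
move=> w_gen Ev; have [t v_t] := w_gen v.
by apply: span_whittaker_casimir Ev _; rewrite v_t; apply/in_span_act/in_span_w.
Qed.

End WhittakerModule.

Theorem mainTheorem4 (f : {poly CC}) (V : lmodType CC)
  (E F H : {linear V -> V}) (HV : is_Rmodule f E F H)
  (a : CC) (Ha : a != 0)
  (w : V) (Hw : whittaker E a w) (Hcyc : cyclic_gen E F H w) (v : V) :
  whittaker E a v <-> exists z : term, in_center f z /\ v = act E F H z w.
Proof.
split=> [Ev | [z [z_c ->]]]; last first.
  exact (act_central_whittaker HV z_c Hw).
have [U U_diff] := backward_diff_surj (2 *: f).
have [c ->] := cyclic_whittaker_casimir HV Ha Hw U_diff v Hcyc Ev.
by exists (peval_term c (casimir U)); split; first exact: casimir_poly_central.
Qed.
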